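(* Let $k\ge1$ and $r\ge1$ be integers, let $\Gamma_1,\ldots,\Gamma_k$ be finite nilpotent groups and let $\Gamma$ be an abelian group (written multiplicatively) of rank at most $r$. Let $\varphi:\Gamma_1\times\cdots\times\Gamma_k\to\Gamma$ be a map that is a homomorphism in each variable. Writing $\varphi(\Gamma_1,\ldots,\Gamma_k)=\{\varphi(g_1,\ldots,g_k):g_i\in\Gamma_i\}$, we have \[ \langle\varphi(\Gamma_1,\ldots,\Gamma_k)\rangle\subset\varphi(\Gamma_1,\ldots,\Gamma_k)^r. \]
   Context: The rank of a group is the minimal cardinality of a generating set. For a subset $X$ of a group, $X^r$ denotes the $r$-fold product set $\{x_1\cdots x_r:x_i\in X\}$, and $\langle X\rangle$ the subgroup generated by $X$. A map is a homomorphism in each variable if fixing all but one argument yields a group homomorphism in the remaining argument. *)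

From HB Require Import structures.
From mathcomp Require Import all_boot all_order all_algebra all_fingroup all_solvable.
Set Implicit Arguments. Unset Strict Implicit. Unset Printing Implicit Defensive.
Import GRing.Theory.
Local Open Scope ring_scope.

(* The abelian group Gamma is modelled as a zmodType (written additively). *)

Definition gen_subgroup (V : zmodType) (X : V -> Prop) : V -> Prop :=
  fun v => forall H : V -> Prop,
    H 0 -> (forall a b, H a -> H b -> H (a - b)) ->
    (forall x, X x -> H x) -> H v.

Definition rank_le (V : zmodType) (r : nat) : Prop :=
  exists s : seq V, (size s <= r)%N /\ forall v, gen_subgroup (fun x => x \in s) v.

Definition prod_set (V : zmodType) (X : V -> Prop) (r : nat) : V -> Prop :=
  fun v => exists f : 'I_r -> V, (forall j, X (f j)) /\ v = \sum_(j < r) f j.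

Definition image_set (k : nat) (gT : 'I_k -> finGroupType) (V : zmodType)
  (phi : (forall i, gT i) -> V) : V -> Prop :=
  fun v => exists g : forall i, gT i, phi g = v.

Definition multihom (k : nat) (gT : 'I_k -> finGroupType) (V : zmodType)
  (phi : (forall i, gT i) -> V) : Prop :=
  forall (i : 'I_k) (g : forall j, gT j) (x y : gT i),
    phi (dfwith g (x * y)%g) = phi (dfwith g x) + phi (dfwith g y).

From HB Require Import structures.
From mathcomp Require Import all_boot all_order all_algebra all_fingroup all_solvable.
From Stdlib Require Import Classical FunctionalExtensionality Wf_nat.
Set Implicit Arguments. Unset Strict Implicit. Unset Printing Implicit Defensive.
Import GRing.Theory.
Local Open Scope ring_scope.

(* Since phi is additive in each variable, its image X is closed under integer
   multiples and killed by the product N of the orders of the groups. Raising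
   every coordinate to a power e multiplies phi by e^k; choosing e by the
   Chinese remainder theorem, an element of X killed by q1 is the value of a
   tuple of \pi(q1)-elements. By multilinearity the value at a product of a
   \pi-tuple and a \pi'-tuple is the sum of the two values, the mixed terms
   having a \pi- and a \pi'-coordinate and hence vanishing. So X is closed
   under sums of elements of coprime orders, and it suffices to prove the
   claim for the elements of X killed by a prime power p^m. Their span A is a
   subgroup of a group with r generators, so it has r generators; Steinitz
   exchange in A/pA gives r elements of X spanning A modulo pA, hence modulo
   p^m A = 0, and integer combinations of them are sums of r elements of X. *)

Section Subgroups.
Variable V : zmodType.
Implicit Types (G X Y Z : V -> Prop) (x y : V).

Definition is_subgroup G : Prop := G 0 /\ forall a b, G a -> G b -> G (a - b).

Section SubgroupTheory.
Variables (G : V -> Prop) (sG : is_subgroup G).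

Lemma subgroup0 : G 0. Proof. exact: sG.1. Qed.

Lemma subgroupB a b : G a -> G b -> G (a - b). Proof. exact: sG.2. Qed.

Lemma subgroupN a : G a -> G (- a).
Proof. by move=> Ga; rewrite -sub0r; apply: subgroupB => //; apply: subgroup0. Qed.

Lemma subgroupD a b : G a -> G b -> G (a + b).
Proof. by move=> Ga Gb; rewrite -[b]opprK; apply/subgroupB/subgroupN. Qed.

Lemma subgroupMn a n : G a -> G (a *+ n).
Proof.
move=> Ga; elim: n => [|n IHn]; first by rewrite mulr0n; apply: subgroup0.
by rewrite mulrS; apply: subgroupD.
Qed.

Lemma subgroupMz a z : G a -> G (a *~ z).
Proof.
case: z => n Ga; first exact: subgroupMn.
by rewrite NegzE mulrNz; apply/subgroupN/subgroupMn.
Qed.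

End SubgroupTheory.

Lemma subgroup_gen X : is_subgroup (gen_subgroup X).
Proof.
split=> [H H0 _ _ | a b Ga Gb H H0 HB HX] //.
exact: HB (Ga H H0 HB HX) (Gb H H0 HB HX).
Qed.

Lemma mem_gen_subgroup X x : X x -> gen_subgroup X x.
Proof. by move=> Xx H _ _; apply. Qed.

Lemma gen_subgroup_sub X G : is_subgroup G -> (forall x, X x -> G x) ->
  forall v, gen_subgroup X v -> G v.
Proof. by move=> [G0 GB] XG v; apply. Qed.

Lemma gen_subgroup_mono X Y : (forall x, X x -> Y x) ->
  forall v, gen_subgroup X v -> gen_subgroup Y v.
Proof.
by move=> XY; apply: gen_subgroup_sub (subgroup_gen Y) _ => x /XY/mem_gen_subgroup.
Qed.

Lemma gen_subgroup_split X Y Z :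
    (forall x, X x -> exists y z, [/\ Y y, Z z & x = y + z]) ->
  forall v, gen_subgroup X v ->
    exists y z, [/\ gen_subgroup Y y, gen_subgroup Z z & v = y + z].
Proof.
move=> XYZ; apply: gen_subgroup_sub => [|x /XYZ[y [z [Yy Zz ->]]]]; last first.
  by exists y, z; split=> //; apply: mem_gen_subgroup.
split; first by exists 0, 0; rewrite addr0; split=> //; apply: subgroup0 (subgroup_gen _).
move=> _ _ [y1 [z1 [Y1 Z1 ->]]] [y2 [z2 [Y2 Z2 ->]]].
exists (y1 - y2), (z1 - z2); split.
- exact: (subgroupB (subgroup_gen Y) Y1 Y2).
- exact: (subgroupB (subgroup_gen Z) Z1 Z2).
- by rewrite opprD addrACA.
Qed.

Fixpoint zspan (l : seq V) (v : V) : Prop :=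
  if l is x :: l' then exists c : int, zspan l' (v - x *~ c) else v = 0.

Lemma zspan_subgroup l : is_subgroup (zspan l).
Proof.
elim: l => [|x l [IH0 IHB]] /=; first by split=> // a b -> ->; rewrite subr0.
split; first by exists 0; rewrite mulr0z subr0.
move=> a b [c Sa] [d Sb]; exists (c - d).
suff -> : a - b - x *~ (c - d) = (a - x *~ c) - (b - x *~ d) by apply: IHB.
by rewrite mulrzBr !opprB !addrA [RHS]addrAC [a - x *~ c - b]addrAC addrAC.
Qed.

Lemma mem_zspan l x : x \in l -> zspan l x.
Proof.
elim: l => [|y l IH] //=; rewrite inE => /predU1P[->|/IH Sx].
  by exists 1; rewrite mulr1z subrr; apply: subgroup0 (zspan_subgroup l).
by exists 0; rewrite mulr0z subr0.
Qed.

Lemma zspan_sub G l : is_subgroup G -> (forall x, x \in l -> G x) ->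
  forall v, zspan l v -> G v.
Proof.
move=> sG; elim: l => [|x l IH] lG v /=; first by move->; apply: subgroup0.
have Gx : G x by apply: lG; rewrite mem_head.
case=> c /IH Sv; rewrite -(subrK (x *~ c) v).
apply: subgroupD => //; last exact: subgroupMz.
by apply: Sv => y yl; apply: lG; rewrite inE yl orbT.
Qed.

Lemma zspan_gen s v : gen_subgroup (fun x => x \in s) v -> zspan s v.
Proof. by apply: gen_subgroup_sub; [apply: zspan_subgroup | apply: mem_zspan]. Qed.

Lemma zspan_cons_coef0 x s H : is_subgroup H ->
    (forall h, H h -> zspan (x :: s) h) ->
    ~ (exists n, (0 < n)%N /\ exists h, H h /\ zspan s (h - x *~ n%:Z)) ->
  forall h, H h -> zspan s h.
Proof.
move=> sH Hs noI h Hh.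
have [[[|n]|n] Sh] := Hs h Hh; first by rewrite mulr0z subr0 in Sh.
  by case: noI; exists n.+1; split=> //; exists h.
case: noI; exists n.+1; split=> //; exists (- h); split; first exact: subgroupN.
have -> : - h - x *~ n.+1%:Z = - (h - x *~ Negz n) by rewrite NegzE mulrNz opprK opprD.
exact: subgroupN (zspan_subgroup s) _ Sh.
Qed.

(* A subgroup of a group generated by [n] elements is generated by [n] of its
   own elements: induct on the generators, keeping as new generator an
   element of [H] whose coefficient on the first generator is the least
   positive one. *)
Lemma zspan_of_subgroup (s : seq V) H : is_subgroup H ->
    (forall h, H h -> zspan s h) ->
  exists a : seq V,
    [/\ size a = size s, forall x, x \in a -> H x & forall h, H h -> zspan a h].
Proof.
elim: s H => [|x s IH] H sH Hs; first by exists [::].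
pose I n := (0 < n)%N /\ exists h, H h /\ zspan s (h - x *~ n%:Z).
have [[n1 In1]|noI] := classic (exists n, I n); last first.
  have [a [sz aH Ha]] := IH H sH (zspan_cons_coef0 sH Hs noI).
  exists (0 :: a); split=> [|y|h Hh]; first by rewrite /= sz.
    by rewrite inE => /predU1P[->|/aH //]; apply: subgroup0 sH.
  by exists 0; rewrite mulr0z subr0; apply: Ha.
have [n [[[n_gt0 [h0 [Hh0 Sh0]]] n_min] _]] :=
  @dec_inh_nat_subset_has_unique_least_element I (fun n => classic (I n))
    (ex_intro _ n1 In1).
pose H' h := H h /\ zspan s h.
have sH' : is_subgroup H'.
  split=> [|a b [Ha Sa] [Hb Sb]].
    by split; [apply: subgroup0 sH | apply: subgroup0 (zspan_subgroup s)].
  by split; [apply: (subgroupB sH) | apply: (subgroupB (zspan_subgroup s))].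
have [a [sz aH Ha]] := IH H' sH' (fun h Hh => Hh.2).
exists (h0 :: a); split=> [|y|h Hh]; first by rewrite /= sz.
  by rewrite inE => /predU1P[->|/aH[]].
have [c Sc] := Hs h Hh; have n0 : n%:Z != 0 by rewrite eqz_nat -lt0n.
move: (c %/ n)%Z (c %% n)%Z (divz_eq c n) (modz_ge0 c n0) (ltz_mod c n0).
move=> q rc cE rc_ge0 rc_lt_n; rewrite {c}cE in Sc.
have Hq : H (h - h0 *~ q) by exact: (subgroupB sH Hh (subgroupMz sH q Hh0)).
have Sq : zspan s ((h - h0 *~ q) - x *~ rc).
  have -> : (h - h0 *~ q) - x *~ rc = (h - x *~ (q * n + rc)) - (h0 - x *~ n) *~ q.
    rewrite mulrzDr mulrzBl -mulrzA [n%:Z * q]mulrC opprD opprB.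
    by rewrite !addrA [_ - x *~ rc + _]addrAC subrK addrAC.
  exact: (subgroupB (zspan_subgroup s) Sc (subgroupMz (zspan_subgroup s) q Sh0)).
have rc0 : rc = 0.
  clear Sc; case: rc rc_ge0 rc_lt_n Sq => [[|r]|//] _ // r_lt_n Sq.
  have /leP := n_min r.+1 (conj isT (ex_intro _ _ (conj Hq Sq))).
  by rewrite leqNgt -ltz_nat r_lt_n.
by exists q; apply: Ha; split; last by rewrite rc0 mulr0z subr0 in Sq.
Qed.

End Subgroups.

Section ProdSet.
Variable V : zmodType.
Implicit Types (Y Z W : V -> Prop).

Lemma prod_set0 Y : prod_set Y 0 0.
Proof. by exists (fun _ => 0); split=> [[]//|]; rewrite big_ord0. Qed.

Lemma prod_setS Y n x w : Y x -> prod_set Y n w -> prod_set Y n.+1 (x + w).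
Proof.
move=> Yx [f [Yf ->]]; exists (fun j => if unlift ord0 j is Some i then f i else x).
split=> [j|]; first by case: (unlift ord0 j).
by rewrite big_ord_recl unlift_none; congr (_ + _); apply: eq_bigr => i _; rewrite liftK.
Qed.

Lemma prod_set_widen Y n m v : Y 0 -> (n <= m)%N -> prod_set Y n v -> prod_set Y m v.
Proof.
move=> Y0 /subnK <-; elim: (m - n)%N => [//|d IH] /IH Yv.
by rewrite addSn -[v]add0r; apply: prod_setS.
Qed.

Lemma prod_set_sub Y Z n :
  (forall y, Y y -> Z y) -> forall v, prod_set Y n v -> prod_set Z n v.
Proof. by move=> YZ v [f [Yf ->]]; exists f; split=> // j; apply: YZ. Qed.

Lemma prod_set_add Y Z W n u w :
    (forall y z, Y y -> Z z -> W (y + z)) ->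
  prod_set Y n u -> prod_set Z n w -> prod_set W n (u + w).
Proof.
move=> YZW [f [Yf ->]] [g [Zg ->]].
by exists (fun j => f j + g j); split=> [j|]; [apply: YZW | rewrite big_split].
Qed.

Lemma zspan_prod_set Y (ys : seq V) :
    (forall y, y \in ys -> Y y) -> (forall y z, Y y -> Y (y *~ z)) ->
  forall v, zspan ys v -> prod_set Y (size ys) v.
Proof.
move=> ysY Yz; elim: ys ysY => [|y ys IH] ysY v /=; first by move->; apply: prod_set0.
case=> c /IH Sv; rewrite -(subrK (y *~ c) v) addrC; apply: prod_setS.
  by apply/Yz/ysY; rewrite mem_head.
by apply: Sv => x xs; apply: ysY; rewrite inE xs orbT.
Qed.

End ProdSet.

Section Torsion.
Variable V : zmodType.
Implicit Type x : V.

Lemma mulrn_dvdn_eq0 x d n : x *+ d = 0 -> (d %| n)%N -> x *+ n = 0.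
Proof. by move=> xd /dvdnP[t ->]; rewrite mulrnA -mulrnAC xd mul0rn. Qed.

Lemma mulrn_modn x d n m : x *+ d = 0 -> n = m %[mod d] -> x *+ n = x *+ m.
Proof.
move=> xd nm; rewrite (divn_eq n d) (divn_eq m d) !mulrnDr nm.
by rewrite !(mulrn_dvdn_eq0 xd (dvdn_mull _ (dvdnn d))).
Qed.

Lemma mulrn_gcdn_eq0 x m n : x *+ m = 0 -> x *+ n = 0 -> x *+ gcdn m n = 0.
Proof.
move=> xm xn; have [u [v uvE]] := Bezoutz m n.
rewrite pmulrn (_ : (gcdn m n)%:Z = gcdz m n) // -uvE mulrzDr.
rewrite [u * _]mulrC [v * _]mulrC !mulrzA.
by rewrite -!pmulrn xm xn !mul0rz addr0.
Qed.

Lemma mulrn_coprime_eq0 x m n : coprime m n -> x *+ m = 0 -> x *+ n = 0 -> x = 0.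
Proof. by move=> /eqP mn1 xm /(mulrn_gcdn_eq0 xm); rewrite mn1. Qed.

Lemma mulrzMn_eq0 x d z : x *+ d = 0 -> x *~ z *+ d = 0.
Proof. by move=> xd; rewrite pmulrn mulrzA_C mulrzA -pmulrn xd mul0rz. Qed.

End Torsion.

Section PrimePowerTorsion.
Variables (V : zmodType) (Y : V -> Prop) (p m : nat).
Hypotheses (p_pr : prime p) (Y0 : Y 0) (Yz : forall y z, Y y -> Y (y *~ z))
  (Y_torsion : forall y, Y y -> y *+ p ^ m = 0).

Let A := gen_subgroup Y.
Let sA : is_subgroup A := subgroup_gen Y.

Lemma gen_subgroup_torsion v : A v -> v *+ p ^ m = 0.
Proof.
apply: (gen_subgroup_sub _ Y_torsion); split=> [|a b ap bp]; first exact: mul0rn.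
by rewrite mulrnBl ap bp subrr.
Qed.

Definition zspan_modp (L : seq V) v := exists s u, [/\ zspan L s, A u & v = s + u *+ p].

Lemma zspan_modp_subgroup L : is_subgroup (zspan_modp L).
Proof.
split=> [|_ _ [s1 [u1 [S1 A1 ->]]] [s2 [u2 [S2 A2 ->]]]].
  exists 0, 0; rewrite mul0rn addr0.
  by split; [apply: subgroup0 (zspan_subgroup L) | apply: subgroup0 sA |].
exists (s1 - s2), (u1 - u2); rewrite mulrnBl opprD addrACA.
by split; [apply: (subgroupB (zspan_subgroup L)) | apply: (subgroupB sA) |].
Qed.

Lemma zspan_modpW L v : zspan L v -> zspan_modp L v.
Proof. by exists v, 0; rewrite mul0rn addr0; split=> //; apply: subgroup0 sA. Qed.

Lemma zspan_modp_mulp L u : A u -> zspan_modp L (u *+ p).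
Proof. by exists 0, u; rewrite add0r; split=> //; apply: subgroup0 (zspan_subgroup L). Qed.

Lemma zspan_modp_sub L1 L2 : (forall x, x \in L1 -> zspan_modp L2 x) ->
  forall v, zspan_modp L1 v -> zspan_modp L2 v.
Proof.
move=> L12 _ [s [u [S1 Au ->]]]; apply: (subgroupD (zspan_modp_subgroup L2)).
  exact: zspan_sub (zspan_modp_subgroup L2) L12 _ S1.
exact: zspan_modp_mulp.
Qed.

Lemma zspan_modp_subset L1 L2 : {subset L1 <= L2} ->
  forall v, zspan_modp L1 v -> zspan_modp L2 v.
Proof. by move=> L12; apply: zspan_modp_sub => x /L12/mem_zspan/zspan_modpW. Qed.

(* The replacement step of Steinitz' exchange lemma in the F_p-vector space
   A / pA: an element [y] outside the span of [L] can replace [a]. *)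
Lemma zspan_modp_exchange a L y : A a -> Y y -> ~ zspan_modp L y ->
    (forall v, A v -> zspan_modp (a :: L) v) ->
  forall v, A v -> zspan_modp (y :: L) v.
Proof.
move=> Aa Yy notLy AaL v /AaL; apply: zspan_modp_sub => x.
rewrite inE => /predU1P[->|xL]; last by apply/zspan_modpW/mem_zspan; rewrite inE xL orbT.
have [s [u [[c Sc] Au yE]]] := AaL y (mem_gen_subgroup Yy).
have c_coprime : coprimez p c.
  rewrite coprimezE /= prime_coprime // -[p]/(`|p%:Z|%N) -dvdzE.
  apply: contra_notN notLy => /dvdzP[t ct].
  exists (s - a *~ c), (a *~ t + u); split=> //.
    exact: (subgroupD sA (subgroupMz sA t Aa) Au).
  by rewrite yE ct mulrzA -pmulrn mulrnDl addrA subrK.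
have [uu [vv]] := Bezoutz p c; rewrite (eqP c_coprime) => uvE.
have -> : a = (y - u *+ p - (s - a *~ c)) *~ vv + (a *+ p) *~ uu.
  rewrite yE addrK opprB addrCA subrr addr0 pmulrn -!mulrzA.
  by rewrite -mulrzDr [c * vv]mulrC [_ * uu]mulrC addrC uvE mulr1z.
have sL := zspan_modp_subgroup (y :: L).
apply: (subgroupD sL); apply: (subgroupMz sL); last exact/zspan_modp_mulp.
apply: (subgroupB sL); last first.
  by apply: zspan_modp_subset (zspan_modpW Sc) => z zL; rewrite inE zL orbT.
apply: (subgroupB sL); last exact: zspan_modp_mulp.
exact/zspan_modpW/mem_zspan/mem_head.
Qed.

Lemma zspan_modp_exchange_seq l w : (forall x, x \in l -> A x) ->
    (forall v, A v -> zspan_modp (l ++ w) v) ->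
  exists ys, [/\ size ys = size l, forall y, y \in ys -> Y y &
                 forall v, A v -> zspan_modp (ys ++ w) v].
Proof.
elim: l w => [|a l IH] w lA Alw; first by exists [::].
have Aa : A a by apply: lA; rewrite mem_head.
have {}lA x : x \in l -> A x by move=> xl; apply: lA; rewrite inE xl orbT.
case: (classic (forall y, Y y -> zspan_modp (l ++ w) y)) =>
  [Ylw | /not_all_ex_not[y nY]]; last first.
  have [Yy notlwy] := imply_to_and _ _ nY.
  have Alyw : forall v, A v -> zspan_modp (l ++ y :: w) v.
    move=> v /(zspan_modp_exchange Aa Yy notlwy Alw); apply: zspan_modp_subset => x.
    by rewrite !(inE, mem_cat) orbCA.
  have [ys [sz ysY Ays]] := IH _ lA Alyw.
  exists (y :: ys); split=> [|z|v /Ays]; first by rewrite /= sz.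
    by rewrite inE => /predU1P[->|/ysY].
  by apply: zspan_modp_subset => x; rewrite /= !(inE, mem_cat) orbCA.
have [ys [sz ysY Ays]] := IH w lA (gen_subgroup_sub (zspan_modp_subgroup _) Ylw).
exists (0 :: ys); split=> [|z|v /Ays]; first by rewrite /= sz.
  by rewrite inE => /predU1P[->|/ysY].
by apply: zspan_modp_subset => x xys; rewrite inE xys orbT.
Qed.

Lemma zspan_modp_iter ys n v : (forall v, A v -> zspan_modp ys v) ->
  A v -> exists s u, [/\ zspan ys s, A u & v = s + u *+ p ^ n].
Proof.
move=> Ays Av; elim: n => [|n [s1 [u1 [S1 A1 ->]]]].
  exists 0, v; rewrite expn0 mulr1n add0r.
  by split=> //; apply: subgroup0 (zspan_subgroup ys).
have [s2 [u2 [S2 A2 ->]]] := Ays u1 A1.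
exists (s1 + s2 *+ p ^ n), u2; split=> //.
  exact: (subgroupD (zspan_subgroup ys) S1 (subgroupMn (zspan_subgroup ys) _ S2)).
by rewrite mulrnDl addrA -mulrnA expnS.
Qed.

(* A / pA is spanned by at most [r] elements of [Y] (a basis chosen among
   them); iterating [A = <ys> + pA] gives [A = <ys> + p^m A = <ys>]. *)
Lemma ptorsion_gen_prod_set (s : seq V) r : (size s <= r)%N ->
  (forall v, zspan s v) -> forall v, A v -> prod_set Y r v.
Proof.
move=> sz_s s_gen.
have [a [sz_a aA Aa]] := zspan_of_subgroup sA (fun v _ => s_gen v).
have Aa0 v : A v -> zspan_modp (a ++ [::]) v by rewrite cats0 => /Aa/zspan_modpW.
have [ys [sz_ys ysY]] := zspan_modp_exchange_seq aA Aa0; rewrite cats0 => Ays.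
move=> v /(zspan_modp_iter m Ays)[s1 [u [S1 Au ->]]].
rewrite gen_subgroup_torsion // addr0.
by apply: prod_set_widen (zspan_prod_set ysY Yz S1) => //; rewrite sz_ys sz_a.
Qed.

End PrimePowerTorsion.

Lemma prime_power_or_coprime_factors d : (0 < d)%N ->
  (exists p m, prime p /\ d = p ^ m)%N \/
  exists q1 q2, [/\ 1 < q1, 1 < q2, coprime q1 q2 & d = q1 * q2]%N.
Proof.
rewrite leq_eqVlt => /predU1P[<-|d_gt1]; first by left; exists 2%N, 0%N.
set p := pdiv d; have d_gt0 := ltnW d_gt1.
have [dp'1|dp'_neq1] := eqVneq (d`_p^')%N 1%N.
  left; exists p, (logn p d); split; first exact: pdiv_prime.
  by rewrite -p_part -{1}(partnC p d_gt0) dp'1 muln1.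
right; exists (d`_p)%N, (d`_p^')%N; split; last by rewrite partnC.
- by rewrite p_part_gt1 pi_pdiv.
- by rewrite ltn_neqAle eq_sym dp'_neq1 part_gt0.
- exact: coprime_partC.
Qed.

Section CoprimeClosedSets.
Variables (V : zmodType) (X : V -> Prop) (r : nat) (s : seq V).
Hypotheses (X0 : X 0) (Xz : forall x z, X x -> X (x *~ z))
  (X_add_coprime : forall q1 q2 x y, (0 < q1)%N -> (0 < q2)%N -> coprime q1 q2 ->
     X x -> x *+ q1 = 0 -> X y -> y *+ q2 = 0 -> X (x + y))
  (sz_s : (size s <= r)%N) (s_gen : forall v, zspan s v).

Definition torsion_part d x := X x /\ x *+ d = 0.

Lemma torsion_part0 d : torsion_part d 0.
Proof. by split; last exact: mul0rn. Qed.

Lemma torsion_partMz d x z : torsion_part d x -> torsion_part d (x *~ z).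
Proof. by case=> Xx xd; split; [apply: Xz | apply: mulrzMn_eq0]. Qed.

Lemma torsion_part_split q1 q2 x : coprime q1 q2 -> torsion_part (q1 * q2) x ->
  exists y z, [/\ torsion_part q1 y, torsion_part q2 z & x = y + z].
Proof.
move=> /eqP q12_coprime [Xx xq]; have [u [v]] := Bezoutz q1 q2.
rewrite [gcdz _ _]/gcdz /= q12_coprime => uvE.
exists ((x *+ q2) *~ v), ((x *+ q1) *~ u); split.
- split; first by rewrite pmulrn; apply/Xz/Xz.
  by apply: mulrzMn_eq0; rewrite -mulrnA mulnC.
- split; first by rewrite pmulrn; apply/Xz/Xz.
  by apply: mulrzMn_eq0; rewrite -mulrnA.
- rewrite !pmulrn -!mulrzA addrC -mulrzDr [q1%:Z * u]mulrC [q2%:Z * v]mulrC uvE.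
  by rewrite mulr1z.
Qed.

Lemma torsion_part_add_coprime q1 q2 y w :
    (0 < q1)%N -> (0 < q2)%N -> coprime q1 q2 ->
  torsion_part q1 y -> torsion_part q2 w -> torsion_part (q1 * q2) (y + w).
Proof.
move=> q1_gt0 q2_gt0 q12 [Xy yq] [Xw wq]; split; first exact: X_add_coprime yq _ wq.
by rewrite mulrnDl [in w *+ _]mulnC !mulrnA yq wq !mul0rn addr0.
Qed.

Lemma gen_torsion_part_prod_set d : (0 < d)%N ->
  forall v, gen_subgroup (torsion_part d) v -> prod_set (torsion_part d) r v.
Proof.
elim/ltn_ind: d => d IH /prime_power_or_coprime_factors.
case=> [[p [m [p_pr ->]]] | [q1 [q2 [q1_gt1 q2_gt1 q12 dE]]]].
  apply: (ptorsion_gen_prod_set (m := m) p_pr _ _ _ sz_s s_gen).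
  - exact: torsion_part0.
  - by move=> x z; apply: torsion_partMz.
  - by move=> x [].
have [q1_gt0 q2_gt0] := (ltnW q1_gt1, ltnW q2_gt1).
move=> v; rewrite dE => /(gen_subgroup_split (fun _ => torsion_part_split q12)).
case=> u [w [Gu Gw ->]].
apply: prod_set_add (IH q1 _ q1_gt0 _ Gu) (IH q2 _ q2_gt0 _ Gw).
- by move=> y z; apply: torsion_part_add_coprime.
- by rewrite dE ltn_Pmulr.
- by rewrite dE ltn_Pmull.
Qed.

Lemma gen_subgroup_prod_set N : (0 < N)%N -> (forall x, X x -> x *+ N = 0) ->
  forall v, gen_subgroup X v -> prod_set X r v.
Proof.
move=> N_gt0 XN v /(gen_subgroup_mono (Y := torsion_part N)) Gv.
apply: prod_set_sub (gen_torsion_part_prod_set N_gt0 (Gv _)) => [x []//|x Xx].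
by split; last exact: XN.
Qed.

End CoprimeClosedSets.

Lemma dfwith_id (I : eqType) (T : I -> Type) (f : forall i, T i) i :
  dfwith f (f i) = f.
Proof. by apply: functional_extensionality_dep => j; case: dfwithP. Qed.

Section Mix.
Variables (k : nat) (T : 'I_k -> Type).
Implicit Types f c : forall i, T i.

Definition mix f c m : forall i, T i := fun j => if (j < m)%N then f j else c j.

Lemma mix0 f c : mix f c 0 = c.
Proof. by []. Qed.

Lemma mix_full f c : mix f c k = f.
Proof. by apply: functional_extensionality_dep => j; rewrite /mix ltn_ord. Qed.

Lemma mix_dfwith f c m (lt_mk : (m < k)%N) (x : T (Ordinal lt_mk)) :
  mix f (dfwith c x) m = dfwith (mix f c m) x.
Proof.
apply: functional_extensionality_dep => j; rewrite /mix.
have [<-|ne] := eqVneq (Ordinal lt_mk) j; first by rewrite !dfwith_in /= ltnn.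
by rewrite !dfwith_out.
Qed.

Lemma mixS f c m (lt_mk : (m < k)%N) :
  mix f c m.+1 = mix f (dfwith c (f (Ordinal lt_mk))) m.
Proof.
rewrite mix_dfwith; apply: functional_extensionality_dep => j; rewrite /mix.
have [<-|ne] := eqVneq (Ordinal lt_mk) j; first by rewrite !dfwith_in /= ltnSn.
rewrite dfwith_out // ltnS leq_eqVlt.
by case: eqP => // j_m; case/eqP: ne; apply: val_inj.
Qed.

End Mix.

Section MultihomImage.
Variables (k : nat) (gT : 'I_k -> finGroupType) (V : zmodType).
Variable phi : (forall i, gT i) -> V.
Hypotheses (k_gt0 : (0 < k)%N) (phiM : multihom phi).
Implicit Types g a b t : forall i, gT i.

Let i0 : 'I_k := Ordinal k_gt0.
Let X := image_set phi.

Lemma phi_dfwith1 g i : phi (dfwith g (1 : gT i)%g) = 0.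
Proof.
by apply: (@addrI _ (phi (dfwith g (1 : gT i)%g))); rewrite addr0 -phiM mulg1.
Qed.

Lemma phi_dfwithX g i (x : gT i) n : phi (dfwith g (x ^+ n)%g) = phi (dfwith g x) *+ n.
Proof.
by elim: n => [|n IHn]; rewrite ?expg0 ?phi_dfwith1 // expgS phiM IHn mulrS.
Qed.

Lemma phi_dfwithV g i (x : gT i) : phi (dfwith g x^-1%g) = - phi (dfwith g x).
Proof. by apply/eqP; rewrite -addr_eq0 -phiM mulVg phi_dfwith1. Qed.

Lemma phi_torsion_coord g i n : (g i ^+ n = 1)%g -> phi g *+ n = 0.
Proof. by move=> gn; rewrite -(dfwith_id g i) -phi_dfwithX gn phi_dfwith1. Qed.

Lemma phi_coprime_coords_eq0 t i j P Q : coprime P Q ->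
  (t i ^+ P = 1)%g -> (t j ^+ Q = 1)%g -> phi t = 0.
Proof.
move=> PQ /phi_torsion_coord tP /phi_torsion_coord tQ.
exact: mulrn_coprime_eq0 PQ tP tQ.
Qed.

Lemma image_set0 : X 0.
Proof. by exists (fun=> 1%g); rewrite -(dfwith_id (fun=> 1%g) i0) phi_dfwith1. Qed.

Lemma image_setMz x z : X x -> X (x *~ z).
Proof.
case=> g <-; case: z => n.
  by exists (dfwith g (g i0 ^+ n)%g); rewrite phi_dfwithX dfwith_id pmulrn.
exists (dfwith g (g i0 ^+ n.+1)^-1%g).
by rewrite phi_dfwithV phi_dfwithX dfwith_id NegzE mulrNz pmulrn.
Qed.

Definition common_exponent := (\prod_(i < k) #|gT i|)%N.

Lemma common_exponent_gt0 : (0 < common_exponent)%N.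
Proof. by apply: prodn_gt0 => i; apply/card_gt0P; exists 1%g. Qed.

Lemma order_dvdn_common_exponent i (x : gT i) : (#[x]%g %| common_exponent)%N.
Proof.
apply: dvdn_trans (order_dvdG (in_setT x)) _; rewrite cardsT.
by rewrite /common_exponent (bigD1 i) //= dvdn_mulr.
Qed.

Lemma image_set_torsion x : X x -> x *+ common_exponent = 0.
Proof.
case=> g <-; apply: (phi_torsion_coord (i := i0)); apply/eqP.
by rewrite -order_dvdn order_dvdn_common_exponent.
Qed.

Lemma phi_expg g e : phi (fun j => g j ^+ e)%g = phi g *+ (e ^ k).
Proof.
rewrite -{1}(mix_full (fun j => g j ^+ e)%g g).
suff mixE m : (m <= k)%N -> phi (mix (fun j => g j ^+ e)%g g m) = phi g *+ (e ^ m).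
  exact: mixE.
elim: m => [|m IHm] lt_mk; first by rewrite mix0 expn0 mulr1n.
rewrite (mixS _ _ lt_mk) mix_dfwith.
have -> : g (Ordinal lt_mk) = mix (fun j => g j ^+ e)%g g m (Ordinal lt_mk).
  by rewrite /mix /= ltnn.
by rewrite phi_dfwithX dfwith_id IHm 1?ltnW // expnSr mulrnA.
Qed.

Lemma phi_mul_coprime a b P Q : coprime P Q ->
    (forall j, a j ^+ P = 1)%g -> (forall j, b j ^+ Q = 1)%g ->
  phi (fun j => a j * b j)%g = phi a + phi b.
Proof.
move=> PQ aP bQ; pose t := (fun j => a j * b j)%g.
suff mixE m c : (0 < m <= k)%N -> phi (mix t c m) = phi (mix a c m) + phi (mix b c m).
  by have := mixE k t; rewrite k_gt0 leqnn !mix_full; apply.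
elim: m c => [//|m IHm] c /andP[_ lt_mk]; set im := Ordinal lt_mk.
have -> : mix t c m.+1 = dfwith (mix t c m) (a im * b im)%g by rewrite mixS mix_dfwith.
rewrite phiM -!mix_dfwith !(mixS _ _ lt_mk).
have [m0|m_gt0] := posnP m; first by subst m; rewrite !mix0.
have cross (f f' : forall i, gT i) P' Q' : coprime P' Q' ->
    (forall j, f j ^+ P' = 1)%g -> (forall j, f' j ^+ Q' = 1)%g ->
  phi (mix f (dfwith c (f' im)) m) = 0.
  move=> P'Q' fP' f'Q'; apply: (phi_coprime_coords_eq0 (i := i0) (j := im) P'Q').
    by rewrite /mix /= m_gt0 fP'.
  by rewrite /mix /= ltnn dfwith_in f'Q'.
rewrite !IHm ?m_gt0 ?(ltnW lt_mk) // (cross b a Q P) 1?coprime_sym // (cross a b P Q) //.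
by rewrite addr0 add0r.
Qed.

Lemma image_set_coprime_part P Q x : coprime P Q -> (P * Q)%N = common_exponent ->
  X x -> x *+ P = 0 -> exists2 a, phi a = x & forall j, (a j ^+ P = 1)%g.
Proof.
move=> PQ PQ_N [g <-] gP; pose e := chinese P Q 1 0.
exists (fun j => g j ^+ e)%g => [|j].
  rewrite phi_expg -[RHS]mulr1n; apply: mulrn_modn gP _.
  by rewrite -modnXm chinese_modl // modnXm exp1n.
apply/eqP; rewrite -expgM -order_dvdn (dvdn_trans (order_dvdn_common_exponent _)) //.
by rewrite -PQ_N mulnC dvdn_mul // /dvdn chinese_modr // mod0n.
Qed.

Lemma image_set_add_coprime q1 q2 x y : (0 < q1)%N -> (0 < q2)%N -> coprime q1 q2 ->
  X x -> x *+ q1 = 0 -> X y -> y *+ q2 = 0 -> X (x + y).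
Proof.
move=> q1_gt0 q2_gt0 q12 Xx xq1 Xy yq2.
pose N := common_exponent; pose pi := \pi(q1).
have killed_part z q rho : (0 < q)%N -> rho.-nat q -> X z -> z *+ q = 0 ->
    z *+ (N`_rho)%N = 0.
  move=> q_gt0 rho_q Xz zq.
  apply: mulrn_dvdn_eq0 (mulrn_gcdn_eq0 zq (image_set_torsion Xz)) _.
  rewrite -(part_pnat_id (pnat_dvd (dvdn_gcdl q N) rho_q)).
  exact: partn_dvd common_exponent_gt0 (dvdn_gcdr _ _).
have xP := killed_part x q1 pi q1_gt0 (pnat_pi q1_gt0) Xx xq1.
have q2_pi' : (pi^'.-nat q2)%N by rewrite -coprime_pi'.
have yQ := killed_part y q2 (pi^')%N q2_gt0 q2_pi' Xy yq2.
have [a <- aP] := image_set_coprime_part (coprime_partC _ _ _)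
  (partnC _ common_exponent_gt0) Xx xP.
have [b <- bQ] : exists2 b, phi b = y & forall j, (b j ^+ (N`_pi^')%N = 1)%g.
  apply: (image_set_coprime_part (Q := (N`_pi)%N)) Xy yQ.
    by rewrite coprime_sym coprime_partC.
  by rewrite mulnC partnC // common_exponent_gt0.
by exists (fun j => a j * b j)%g; apply: phi_mul_coprime (coprime_partC _ _ _) aP bQ.
Qed.

End MultihomImage.

Theorem proposition6p1 (k r : nat) (gT : 'I_k -> finGroupType) (V : zmodType)
  (phi : (forall i, gT i) -> V) :
  (0 < k)%N -> (0 < r)%N ->
  (forall i, nilpotent [set: gT i]) ->
  rank_le V r ->
  multihom phi ->
  forall v, gen_subgroup (image_set phi) v -> prod_set (image_set phi) r v.
Proof.
move=> k_gt0 _ _ [s [sz_s s_gen]] phiM.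
apply: (gen_subgroup_prod_set _ _ _ sz_s _ (common_exponent_gt0 gT)).
- exact: image_set0.
- exact: image_setMz.
- exact: image_set_add_coprime.
- by move=> v; apply: zspan_gen (s_gen v).
- exact: image_set_torsion.
Qed.
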